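(* Let $G$ be a $K_4$-free graph whose diamonds are mutually edge-disjoint. Then $\theta_e(G)=|E(G)|-2t(G)+d(G)$.
   Context: All graphs are finite and simple. A diamond is a subgraph isomorphic to $K_4$ minus one edge. $t(G)$ is the number of triangles of $G$ and $d(G)$ the number of diamonds of $G$. An edge clique cover of $G$ is a collection of cliques of $G$ such that every edge has both endpoints in some clique of the collection; $\theta_e(G)$ is the minimum size of an edge clique cover of $G$. *)

(* A finite simple graph = symmetric irreflexive rel on a finType. *)
From HB Require Import structures.
From mathcomp Require Import all_boot all_order all_algebra.
Set Implicit Arguments. Unset Strict Implicit. Unset Printing Implicit Defensive.

Section Graph.
Variables (T : finType) (e : rel T).

Definition is_clique (A : {set T}) : bool :=
  [forall x in A, forall y in A, (x != y) ==> e x y].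

Definition edges : {set {set T}} :=
  [set A : {set T} | (#|A| == 2) && is_clique A].

Definition triangles : {set {set T}} :=
  [set A : {set T} | (#|A| == 3) && is_clique A].
Definition t_num : nat := #|triangles|.

Definition K4_free : bool := [forall A : {set T}, (#|A| == 4) ==> ~~ is_clique A].

(* A diamond (subgraph isomorphic to K4 minus an edge), identified by its
   edge set: 5 edges of G spanning exactly 4 vertices (any 5 of the 6 pairs
   on 4 vertices form K4 - e). *)
Definition is_diamond (F : {set {set T}}) : bool :=
  [&& F \subset edges, #|F| == 5 & #|\bigcup_(f in F) f| == 4].
Definition diamonds : {set {set {set T}}} := [set F | is_diamond F].
Definition d_num : nat := #|diamonds|.

Definition is_edge_clique_cover (C : {set {set T}}) : bool :=
  [forall K in C, is_clique K] &&
  [forall f in edges, [exists K in C, f \subset K]].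

(* theta_e(G): minimum size of an edge clique cover (the set of edges is
   itself a cover, so #|edges| is a valid default for the min). *)
Definition theta_e : nat :=
  \big[minn/#|edges|]_(C : {set {set T}} | is_edge_clique_cover C) #|C|.

End Graph.

From HB Require Import structures.
From mathcomp Require Import all_boot all_order all_algebra.
From mathcomp Require Import zify.
Set Implicit Arguments. Unset Strict Implicit. Unset Printing Implicit Defensive.

(* Write E_k for the set of edges lying in exactly k triangles.
   - Two triangles sharing an edge span a diamond, and every diamond arises
     in this way.  As diamonds are edge-disjoint, a triangle shares an edge
     with at most one other triangle; hence every edge lies in at most two
     triangles and every triangle has a private edge, in no other triangle.
   - An edge f dominates a clique S if every clique through f lies in S.  A
     cover clique through a dominating edge of S lies in S and determines S,
     so cliques that each have a dominating edge need as many cover cliques.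
     In a K4-free graph private edges dominate their triangles and the edges
     of E_0 dominate themselves; since triangles and E_0 form a cover,
     theta_e(G) = t(G) + |E_0|.
   - Diamonds correspond bijectively to their diagonals, i.e. to E_2.
   - Double counting: |E| = |E_0| + |E_1| + |E_2| and 3 t = |E_1| + 2 |E_2|. *)

Lemma sum_indicator (I : finType) (A : {pred I}) (P : pred I) :
  \sum_(i in A) (P i : nat) = #|[set i in A | P i]|.
Proof. by rewrite -sum1dep_card big_mkcondr; apply: eq_bigr => i _; case: (P i). Qed.

Lemma card_by_value (I : finType) (A : {set I}) (h : I -> nat) :
  {in A, forall i, h i <= 2} ->
  #|A| = #|[set i in A | h i == 0]| + #|[set i in A | h i == 1]|
         + #|[set i in A | h i == 2]|.
Proof.
move=> h_le2; rewrite -!sum_indicator -!big_split -sum1_card /=.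
by apply: eq_bigr => i /h_le2; case: (h i) => [|[|[|]]].
Qed.

Lemma sum_by_value (I : finType) (A : {set I}) (h : I -> nat) :
  {in A, forall i, h i <= 2} ->
  \sum_(i in A) h i = #|[set i in A | h i == 1]| + 2 * #|[set i in A | h i == 2]|.
Proof.
move=> h_le2; rewrite -!sum_indicator big_distrr -big_split /=.
by apply: eq_bigr => i /h_le2; case: (h i) => [|[|[|]]].
Qed.

Section Cliques.
Variables (T : finType) (e : rel T).

Lemma cliqueP (A : {set T}) :
  reflect (forall x y, x \in A -> y \in A -> x != y -> e x y) (is_clique e A).
Proof.
apply: (iffP forallP) => [H x y xA yA nxy | H x].
  by move: (H x); rewrite xA /= => /forallP /(_ y); rewrite yA nxy.
by apply/implyP => xA; apply/forallP => y; apply/implyP => yA; apply/implyP; apply: H.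
Qed.

Lemma clique_sub (A B : {set T}) : A \subset B -> is_clique e B -> is_clique e A.
Proof.
by move=> /subsetP sAB /cliqueP cB; apply/cliqueP => x y /sAB xB /sAB; apply: cB.
Qed.

Lemma edge_card (f : {set T}) : f \in edges e -> #|f| = 2.
Proof. by rewrite inE => /andP [/eqP]. Qed.

Lemma edge_clique (f : {set T}) : f \in edges e -> is_clique e f.
Proof. by rewrite inE => /andP []. Qed.

Lemma triangle_card (X : {set T}) : X \in triangles e -> #|X| = 3.
Proof. by rewrite inE => /andP [/eqP]. Qed.

Lemma triangle_clique (X : {set T}) : X \in triangles e -> is_clique e X.
Proof. by rewrite inE => /andP []. Qed.

Definition pairs (X : {set T}) : {set {set T}} :=
  [set A : {set T} | A \subset X & #|A| == 2].

Lemma card_pairs (X : {set T}) : #|pairs X| = 'C(#|X|, 2).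
Proof. exact: cards_draws. Qed.

Lemma pairsI (X Y : {set T}) : pairs X :&: pairs Y = pairs (X :&: Y).
Proof. by apply/setP => A; rewrite !inE subsetI andbACA andbb. Qed.

Lemma pairs_cover (X : {set T}) : 1 < #|X| -> \bigcup_(A in pairs X) A = X.
Proof.
move=> X_gt1; apply/eqP; rewrite eqEsubset; apply/andP; split.
  by apply/bigcupsP => A; rewrite inE => /andP [].
apply/subsetP => x xX.
have : 0 < #|X :\ x| by move: X_gt1; rewrite (cardsD1 x) xX.
case/card_gt0P => y; rewrite !inE => /andP [nyx yX].
apply/bigcupP; exists [set x; y]; last by rewrite !inE eqxx.
by rewrite inE cards2 (eq_sym x) nyx subUset !sub1set xX yX.
Qed.

Lemma clique_pairsE (X : {set T}) : is_clique e X = (pairs X \subset edges e).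
Proof.
apply/idP/idP => [cX | /subsetP pE].
  apply/subsetP => A; rewrite !inE => /andP [AX ->].
  exact: clique_sub cX.
apply/cliqueP => x y xX yX nxy.
have /pE /edge_clique /cliqueP : [set x; y] \in pairs X.
  by rewrite inE cards2 nxy subUset !sub1set xX yX.
by apply; rewrite ?inE ?eqxx ?orbT.
Qed.

Lemma pairs_sub (f X : {set T}) : f \in pairs X -> f \subset X.
Proof. by rewrite inE => /andP []. Qed.

Lemma triangle_pairs_edges (X : {set T}) : X \in triangles e -> pairs X \subset edges e.
Proof. by move/triangle_clique; rewrite clique_pairsE. Qed.

Lemma meet_3sets (X Y : {set T}) :
  #|X| = 3 -> #|Y| = 3 -> X != Y -> #|X :&: Y| <= 2.
Proof.
move=> cX cY; apply: contraR; rewrite -ltnNge => gt2.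
have eX : X :&: Y = X by apply/eqP; rewrite eqEcard subsetIl cX.
have eY : X :&: Y = Y by apply/eqP; rewrite eqEcard subsetIr cY.
by rewrite -eX eY.
Qed.

Definition tri (f : {set T}) : {set {set T}} := [set X in triangles e | f \subset X].

Lemma triP (f X : {set T}) : reflect (X \in triangles e /\ f \subset X) (X \in tri f).
Proof. by apply: (iffP idP); rewrite [X \in tri f]in_set => /andP. Qed.

Lemma tri_meet (f X Y : {set T}) :
  f \in edges e -> X \in tri f -> Y \in tri f -> X != Y -> X :&: Y = f.
Proof.
move=> ef /triP [tX fX] /triP [tY fY] nXY.
apply/eqP; rewrite eq_sym eqEcard subsetI fX fY (edge_card ef).
by apply: meet_3sets; rewrite ?triangle_card.
Qed.

Lemma diamond_of_triangles (X Y : {set T}) :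
  X \in triangles e -> Y \in triangles e -> #|X :&: Y| = 2 ->
  is_diamond e (pairs X :|: pairs Y).
Proof.
move=> tX tY cXY; have cX := triangle_card tX; have cY := triangle_card tY.
apply/and3P; split.
- by rewrite subUset -!clique_pairsE !triangle_clique.
- by rewrite cardsU pairsI !card_pairs cXY cX cY.
- by rewrite bigcup_setU !pairs_cover ?cX ?cY // cardsU cXY cX cY.
Qed.

Definition vertices (D : {set {set T}}) : {set T} := \bigcup_(f in D) f.

Lemma diamond_missing_pair (D : {set {set T}}) :
  is_diamond e D -> exists2 h, h \in pairs (vertices D) & D = pairs (vertices D) :\ h.
Proof.
case/and3P => /subsetP DE /eqP cD /eqP cV.
have DV : D \subset pairs (vertices D).
  apply/subsetP => f fD; rewrite inE (bigcup_sup _ fD).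
  by rewrite (edge_card (DE _ fD)).
have : #|pairs (vertices D) :\: D| = 1.
  by rewrite cardsD (setIidPr DV) card_pairs cV cD.
move/eqP/cards1P => [h hdef]; exists h; first by have := set11 h; rewrite -hdef inE => /andP [].
by rewrite -hdef setDDr setDv set0U (setIidPr DV).
Qed.

Lemma pairs_del_vertex (V h : {set T}) (c : T) :
  c \in h -> pairs (V :\ c) \subset pairs V :\ h.
Proof.
move=> ch; apply/subsetP => A; rewrite !inE => /andP [AVc ->].
rewrite (subset_trans AVc (subsetDl _ _)) !andbT.
by move: AVc; apply: contraTneq => ->; apply/subsetPn; exists c; rewrite // !inE eqxx.
Qed.

Lemma diamond_triangles (D : {set {set T}}) : is_diamond e D ->
  exists X Y, [/\ X \in triangles e, Y \in triangles e, X != Y,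
                  #|X :&: Y| = 2 & D = pairs X :|: pairs Y].
Proof.
move=> dD; have [h hV Dh] := diamond_missing_pair dD.
case/and3P: dD => DE /eqP cD /eqP; rewrite -/(vertices D) => cV.
set V := vertices D in hV Dh cV.
move: hV; rewrite inE => /andP [/subsetP hV /cards2P [a [b [nab hab]]]].
have ah : a \in h by rewrite hab !inE eqxx.
have bh : b \in h by rewrite hab !inE eqxx orbT.
have tri_del c : c \in h -> pairs (V :\ c) \subset D /\ V :\ c \in triangles e.
  move=> ch; have sD : pairs (V :\ c) \subset D by rewrite Dh pairs_del_vertex.
  split=> //; rewrite inE clique_pairsE (subset_trans sD DE) andbT.
  by move: cV; rewrite (cardsD1 c) (hV _ ch) add1n => [[->]].
have [sXD tX] := tri_del a ah; have [sYD tY] := tri_del b bh.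
have nXY : V :\ a != V :\ b.
  by apply/negP => /eqP/setP/(_ b); rewrite !inE eqxx eq_sym nab hV.
have cXY : #|(V :\ a) :&: (V :\ b)| = 2.
  have le2 := meet_3sets (triangle_card tX) (triangle_card tY) nXY.
  have : (V :\ a) :|: (V :\ b) \subset V by rewrite subUset !subsetDl.
  by move/subset_leq_card; rewrite cardsU (triangle_card tX) (triangle_card tY) cV; lia.
exists (V :\ a), (V :\ b); split=> //; apply/eqP; rewrite eq_sym eqEcard subUset sXD sYD.
by rewrite cardsU pairsI !card_pairs cXY !triangle_card // cD.
Qed.

Lemma edges_in_triangle (X : {set T}) :
  X \in triangles e -> [set f in edges e | f \subset X] = pairs X.
Proof.
move=> tX; apply/setP => f; rewrite !inE andbC; apply: andb_id2l => fX.
by apply: andb_idr => _; apply: clique_sub fX (triangle_clique tX).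
Qed.

Lemma sum_tri : \sum_(f in edges e) #|tri f| = 3 * t_num e.
Proof.
under eq_bigr do rewrite -sum_indicator.
rewrite exchange_big /= /t_num mulnC -sum_nat_const; apply: eq_bigr => X tX.
by rewrite sum_indicator edges_in_triangle // card_pairs (triangle_card tX).
Qed.

Lemma edges_cover : is_edge_clique_cover e (edges e).
Proof.
apply/andP; split; first by apply/forall_inP => f; apply: edge_clique.
by apply/forall_inP => f ef; apply/exists_inP; exists f.
Qed.

Lemma theta_le_cover (C : {set {set T}}) : is_edge_clique_cover e C -> theta_e e <= #|C|.
Proof.
move=> covC; rewrite /theta_e -minEnat.
exact: (@Order.TotalTheory.bigmin_le_cond _ _ _ _ C
          (fun K => is_edge_clique_cover e K) (fun K : {set {set T}} => #|K|) covC).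
Qed.

Lemma theta_ge (m : nat) :
  (forall C, is_edge_clique_cover e C -> m <= #|C|) -> m <= theta_e e.
Proof.
move=> lb; rewrite /theta_e; elim/big_ind: _ => [|x y mx my|C /lb //].
  exact/lb/edges_cover.
by rewrite leq_min mx my.
Qed.

Definition dominates (f S : {set T}) : bool :=
  [forall K : {set T}, is_clique e K && (f \subset K) ==> (K \subset S)].

Lemma dominatesP (f S : {set T}) :
  reflect (forall K, is_clique e K -> f \subset K -> K \subset S) (dominates f S).
Proof.
apply: (iffP forallP) => [dom K cK fK | dom K]; first by have := dom K; rewrite cK fK.
by apply/implyP => /andP [cK fK]; apply: dom.
Qed.

(* Lower bound: cliques each dominated by some edge need pairwise distinct
   cliques of any cover, since a cover clique through a dominating edge of
   X lies inside X and then determines X. *)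
Lemma cover_lower (S C : {set {set T}}) :
  is_edge_clique_cover e C -> {in S, forall X, is_clique e X} ->
  {in S, forall X, exists2 f, f \in edges e & dominates f X} -> #|S| <= #|C|.
Proof.
case/andP => /forall_inP cliqueC /forall_inP coverC cliqueS domS.
pose w X := odflt set0 [pick f in edges e | dominates f X].
have wP X : X \in S -> w X \in edges e /\ dominates (w X) X.
  move=> XS; rewrite /w; case: pickP => [f /andP [] | none] //=.
  by have [f ef dom] := domS X XS; move: (none f); rewrite ef dom.
pose g X := odflt set0 [pick K in C | w X \subset K].
have gP X : X \in S -> g X \in C /\ w X \subset g X.
  move=> XS; rewrite /g; case: pickP => [K /andP [] | none] //=.
  have /exists_inP [K KC wK] := coverC _ (proj1 (wP X XS)).
  by move: (none K); rewrite KC wK.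
have gS X : X \in S -> g X \subset X.
  move=> XS; have [gC wg] := gP X XS.
  by apply: (dominatesP _ _ (proj2 (wP X XS))); first exact: cliqueC.
have g_inj : {in S &, injective g}.
  move=> X Y XS YS gXY; apply/eqP; rewrite eqEsubset.
  have dom Z W : Z \in S -> W \in S -> g Z = g W -> W \subset Z.
    move=> ZS WS gZW; apply: (dominatesP _ _ (proj2 (wP Z ZS))) (cliqueS _ WS) _.
    by rewrite (subset_trans (proj2 (gP Z ZS))) // gZW gS.
  by rewrite !dom.
rewrite -(card_in_imset g_inj); apply: subset_leq_card.
by apply/subsetP => _ /imsetP [X XS ->]; case: (gP X XS).
Qed.

Definition edges_in (k : nat) : {set {set T}} := [set f in edges e | #|tri f| == k].

Lemma triangles_bare_cover : is_edge_clique_cover e (triangles e :|: edges_in 0).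
Proof.
apply/andP; split.
  apply/forall_inP => K; rewrite in_setU => /orP [/triangle_clique // |].
  by rewrite inE => /andP [/edge_clique cK _].
apply/forall_inP => f ef; apply/exists_inP.
case: (set_0Vmem (tri f)) => [tf0 | [X /triP [tX fX]]]; last by exists X; rewrite // in_setU tX.
by exists f; rewrite // in_setU [f \in edges_in 0]inE ef tf0 cards0 orbT.
Qed.

(* Triangles and edges have different sizes, so the union is disjoint. *)
Lemma card_triangles_bare : #|triangles e :|: edges_in 0| = t_num e + #|edges_in 0|.
Proof.
rewrite cardsU; suff -> : triangles e :&: edges_in 0 = set0 by rewrite cards0 subn0.
apply/setP => X; rewrite in_setI in_set0.
by apply/negbTE/andP => -[/triangle_card c3 /setIdP [/edge_card]]; rewrite c3.
Qed.

(* Three distinct triangles: the third is not covered by the pairs of the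
   other two, as it shares at most one pair with each of them. *)
Lemma pairs_not_covered (X Y Z : {set T}) :
  #|X| = 3 -> #|Y| = 3 -> #|Z| = 3 -> Z != X -> Z != Y ->
  ~~ (pairs Z \subset pairs X :|: pairs Y).
Proof.
move=> cX cY cZ nZX nZY; apply/negP => sZ.
have le1 (W : {set T}) : #|W| = 3 -> Z != W -> #|pairs (Z :&: W)| <= 1.
  by move=> cW /(meet_3sets cZ cW); rewrite card_pairs; case: #|_| => [|[|[|]]].
have : #|pairs Z| <= #|pairs (Z :&: X)| + #|pairs (Z :&: Y)|.
  rewrite -!pairsI; apply: leq_trans (leq_card_setU _ _).
  by rewrite -setIUr; apply: subset_leq_card; rewrite subsetI subxx sZ.
rewrite card_pairs cZ binS bin1 bin2 /=.
by move/leq_trans/(_ (leq_add (le1 X cX nZX) (le1 Y cY nZY))).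
Qed.

End Cliques.

Section K4Free.
Variables (T : finType) (e : rel T).
Hypothesis hK4 : K4_free e.

Lemma clique_le3 (A : {set T}) : is_clique e A -> #|A| <= 3.
Proof.
move=> cA; rewrite leqNgt; apply/negP => gt3.
have : 0 < #|[set B : {set T} | B \subset A & #|B| == 4]| by rewrite cards_draws bin_gt0.
case/card_gt0P => B; rewrite inE => /andP [sBA cB].
by move/forallP: hK4 => /(_ B); rewrite cB (clique_sub sBA cA).
Qed.

Lemma clique_through_edge (f K : {set T}) :
  f \in edges e -> is_clique e K -> f \subset K -> K = f \/ K \in tri e f.
Proof.
move=> ef cK fK; have := clique_le3 cK; rewrite leq_eqVlt ltnS => /orP [/eqP c3 | le2].
  by right; apply/triP; rewrite inE c3 eqxx cK.
by left; apply/eqP; rewrite eq_sym eqEcard fK (edge_card ef).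
Qed.

Lemma edge_dominates (f S : {set T}) :
  f \in edges e -> f \subset S -> tri e f \subset [set S] -> dominates e f S.
Proof.
move=> ef fS /subsetP triS; apply/dominatesP => K cK fK.
case: (clique_through_edge ef cK fK) => [-> // | /triS].
by rewrite inE => /eqP ->.
Qed.

End K4Free.

Section DisjointDiamonds.
Variables (T : finType) (e : rel T).
Hypothesis hK4 : K4_free e.
Hypothesis hdis : forall D1 D2 : {set {set T}}, is_diamond e D1 -> is_diamond e D2 ->
  D1 != D2 -> [disjoint D1 & D2].

(* A triangle shares an edge with at most one other triangle: two such
   neighbours would give two distinct diamonds sharing the triangle's edges. *)
Lemma neighbour_unique (X Y Z : {set T}) :
  X \in triangles e -> Y \in triangles e -> Z \in triangles e ->
  X != Y -> X != Z -> #|X :&: Y| = 2 -> #|X :&: Z| = 2 -> Y = Z.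
Proof.
move=> tX tY tZ nXY nXZ cXY cXZ; apply/eqP; apply: contraT => nYZ.
have nD : pairs X :|: pairs Y != pairs X :|: pairs Z.
  have nZX : Z != X by rewrite eq_sym.
  have nZY : Z != Y by rewrite eq_sym.
  have := pairs_not_covered (triangle_card tX) (triangle_card tY) (triangle_card tZ) nZX nZY.
  by apply: contraNneq => ->; apply: subsetUr.
have := hdis (diamond_of_triangles tX tY cXY) (diamond_of_triangles tX tZ cXZ) nD.
have XY_X : X :&: Y \in pairs X by rewrite inE subsetIl cXY.
by move/disjointFr; move/(_ (X :&: Y)); rewrite !in_setU XY_X => /(_ isT).
Qed.

Lemma tri_le2 (f : {set T}) : f \in edges e -> #|tri e f| <= 2.
Proof.
move=> ef; case: (set_0Vmem (tri e f)) => [-> | [X Xf]]; first by rewrite cards0.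
rewrite (cardsD1 X) Xf ltnS; apply/card_le1_eqP => Y Z.
rewrite !in_setD1 => /andP [nYX Yf] /andP [nZX Zf].
have [tX _] := triP _ _ _ Xf; have [tY _] := triP _ _ _ Yf; have [tZ _] := triP _ _ _ Zf.
symmetry; apply: (neighbour_unique tX tY tZ); rewrite 1?eq_sym //.
  by rewrite (tri_meet ef Xf Yf) ?(edge_card ef) // eq_sym.
by rewrite (tri_meet ef Xf Zf) ?(edge_card ef) // eq_sym.
Qed.

Lemma tri_pair (f X Y : {set T}) : f \in edges e ->
  X \in tri e f -> Y \in tri e f -> X != Y -> tri e f = [set X; Y].
Proof.
move=> ef Xf Yf nXY; apply/eqP; rewrite eq_sym eqEcard subUset !sub1set Xf Yf.
by rewrite cards2 nXY tri_le2.
Qed.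

(* Every triangle has a private edge, lying in no other triangle: an edge
   avoiding its (unique, if any) neighbour. *)
Lemma private_edge (X : {set T}) :
  X \in triangles e -> exists2 f, f \in pairs X & tri e f = [set X].
Proof.
move=> tX; have cX := triangle_card tX.
have Xf f : f \in pairs X -> X \in tri e f by move/pairs_sub=> fX; apply/triP.
have ef f : f \in pairs X -> f \in edges e by apply/subsetP/triangle_pairs_edges.
have meet f Z : f \in pairs X -> Z \in triangles e -> Z != X -> f \subset Z -> X :&: Z = f.
  by move=> fX tZ nZX fZ; apply: (tri_meet (ef f fX) (Xf f fX)); [apply/triP | rewrite eq_sym].
have only_X f : f \in pairs X ->
    (forall Z, Z \in triangles e -> Z != X -> ~~ (f \subset Z)) -> tri e f = [set X].
  move=> fX free; apply/setP => Z; rewrite in_set1; apply/idP/eqP => [Zf | ->].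
    by case/triP: Zf => tZ; apply: contraTeq; apply: free.
  exact: Xf.
case: (boolP [exists Y in triangles e, (Y != X) && (#|X :&: Y| == 2)]).
  case/exists_inP => Y tY /andP [nYX /eqP cXY].
  have : 0 < #|pairs X :\: pairs (X :&: Y)|.
    by rewrite cardsD pairsI setIA setIid !card_pairs cX cXY.
  case/card_gt0P => f; rewrite inE => /andP [fXY fX]; exists f => //.
  apply: only_X => // Z tZ nZX; move: fXY; apply: contra => fZ.
  have XZf := meet f Z fX tZ nZX fZ.
  have -> : Y = Z.
    by apply: (neighbour_unique tX tY tZ); rewrite 1?eq_sym // XZf (edge_card (ef f fX)).
  by rewrite XZf inE subxx (edge_card (ef f fX)).
move/exists_inPn => no_nb.
have : 0 < #|pairs X| by rewrite card_pairs cX.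
case/card_gt0P => f fX; exists f => //; apply: only_X => // Z tZ nZX.
apply/negP => /(meet f Z fX tZ nZX) XZf; have := no_nb Z tZ.
by rewrite nZX XZf (edge_card (ef f fX)).
Qed.

(* theta_e(G) = t(G) + |E_0|: the triangles and the edges in no triangle form
   a cover, and each of them owns a dominating edge (a private edge for a
   triangle, the edge itself otherwise). *)
Lemma theta_value : theta_e e = t_num e + #|edges_in e 0|.
Proof.
apply/eqP; rewrite eqn_leq -card_triangles_bare theta_le_cover ?triangles_bare_cover //=.
apply: theta_ge => C covC; apply: (cover_lower covC) => X; rewrite in_setU.
  by case/orP => [/triangle_clique // | /setIdP [/edge_clique]].
case/orP => [tX | /setIdP [eX /eqP/cards0_eq tX0]].
  have [f fX tf] := private_edge tX.
  have ef : f \in edges e by apply: subsetP (triangle_pairs_edges tX) f fX.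
  by exists f => //; apply: (edge_dominates hK4); rewrite ?tf ?subxx ?pairs_sub.
by exists X => //; apply: (edge_dominates hK4); rewrite ?tX0 ?sub0set.
Qed.

Definition diamond_at (f : {set T}) : {set {set T}} := \bigcup_(X in tri e f) pairs X.

Lemma double_edgeP (f : {set T}) : f \in edges_in e 2 ->
  exists X Y, [/\ X != Y, X \in triangles e, Y \in triangles e, X :&: Y = f
                & diamond_at f = pairs X :|: pairs Y].
Proof.
case/setIdP => ef /cards2P [X [Y [nXY tf]]].
have Xf : X \in tri e f by rewrite tf !inE eqxx.
have Yf : Y \in tri e f by rewrite tf !inE eqxx orbT.
exists X, Y; split => //; first by case/triP: Xf.
- by case/triP: Yf.
- exact: tri_meet ef Xf Yf nXY.
by rewrite /diamond_at tf bigcup_setU !big_set1.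
Qed.

Lemma diamond_at_diamond (f : {set T}) : f \in edges_in e 2 -> is_diamond e (diamond_at f).
Proof.
move=> f2; have [X [Y [_ tX tY XYf ->]]] := double_edgeP f2.
by apply: diamond_of_triangles; rewrite // XYf; case/setIdP: f2 => /edge_card.
Qed.

Lemma other_triangle (f X : {set T}) :
  f \in edges_in e 2 -> X \in tri e f -> exists2 Y, Y \in tri e f & X != Y.
Proof.
case/setIdP => _ /eqP c2 Xf; have : 0 < #|tri e f :\ X|.
  by move: c2; rewrite (cardsD1 X) Xf add1n => -[->].
by case/card_gt0P => Y; rewrite in_setD1 => /andP [nYX Yf]; exists Y; rewrite // eq_sym.
Qed.

Lemma diamond_at_surj (D : {set {set T}}) :
  is_diamond e D -> exists2 f, f \in edges_in e 2 & D = diamond_at f.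
Proof.
case/diamond_triangles => X [Y [tX tY nXY cXY ->]].
have ef : X :&: Y \in edges e.
  by apply: subsetP (triangle_pairs_edges tX) _ _; rewrite inE subsetIl cXY.
have Xf : X \in tri e (X :&: Y) by apply/triP; rewrite subsetIl.
have Yf : Y \in tri e (X :&: Y) by apply/triP; rewrite subsetIr.
have tf := tri_pair ef Xf Yf nXY.
exists (X :&: Y); first by rewrite inE ef tf cards2 nXY.
by rewrite /diamond_at tf bigcup_setU !big_set1.
Qed.

(* The diagonal f of a diamond is recovered from it: an edge g of the
   diamond at f in two triangles shares a triangle X with f, and the other
   triangles through f and g are both the unique neighbour of X. *)
Lemma diamond_at_diagonal (f g : {set T}) :
  f \in edges_in e 2 -> g \in edges_in e 2 -> g \in diamond_at f -> g = f.
Proof.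
move=> f2 g2 /bigcupP [X Xf gX].
have /setIdP [ef _] := f2; have /setIdP [eg _] := g2.
have Xg : X \in tri e g by case/triP: (Xf) => tX _; apply/triP; rewrite pairs_sub.
have [Y Yf nXY] := other_triangle f2 Xf; have [Z Zg nXZ] := other_triangle g2 Xg.
case/triP: (Xf) => tX _; case/triP: (Yf) => tY _; case/triP: (Zg) => tZ _.
have XYf := tri_meet ef Xf Yf nXY; have XZg := tri_meet eg Xg Zg nXZ.
have YZ : Y = Z.
  by apply: (neighbour_unique tX tY tZ nXY nXZ); rewrite ?XYf ?XZg ?(edge_card ef) ?(edge_card eg).
by rewrite -XZg -YZ XYf.
Qed.

Lemma diamond_at_inj : {in edges_in e 2 &, injective diamond_at}.
Proof.
move=> f g f2 g2 fg; apply: diamond_at_diagonal => //; rewrite -fg.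
have [X [Y [_ _ _ XYf ->]]] := double_edgeP f2.
by rewrite in_setU inE -{1}XYf subsetIl (edge_card (proj1 (setIdP f2))).
Qed.

Lemma d_num_double : d_num e = #|edges_in e 2|.
Proof.
rewrite /d_num -(card_in_imset diamond_at_inj); apply: eq_card => D; rewrite inE.
apply/idP/imsetP => [/diamond_at_surj [f f2 ->] | [f f2 ->]]; first by exists f.
exact: diamond_at_diamond.
Qed.

End DisjointDiamonds.

Theorem mainTheorem10 (T : finType) (e : rel T)
  (e_sym : symmetric e) (e_irr : irreflexive e)
  (hK4 : K4_free e)
  (hdis : forall D1 D2 : {set {set T}}, is_diamond e D1 -> is_diamond e D2 ->
            D1 != D2 -> [disjoint D1 & D2]) :
  Posz (theta_e e) = (Posz #|edges e| - 2 * Posz (t_num e) + Posz (d_num e))%R.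
Proof.
have split_edges : #|edges e| = #|edges_in e 0| + #|edges_in e 1| + #|edges_in e 2|.
  exact: card_by_value (tri_le2 hdis).
have count_tri : 3 * t_num e = #|edges_in e 1| + 2 * #|edges_in e 2|.
  by rewrite -sum_tri; exact: sum_by_value (tri_le2 hdis).
rewrite (theta_value hK4 hdis) (d_num_double hdis).
lia.
Qed.
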